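(* Let $(V_0,V_1,V_2,V_3,w)$ be a geometric quintuple. Then for $w$ in a nonempty Zariski open subset $\mathcal{U}'$ (of the space of such tensors, up to the scaling action of $\mathbb{G}_m^4$), the linear map $\langle-,w\rangle\colon V_2^\vee\otimes V_3^\vee\to V_0\otimes V_1$ (contraction with $w$ in the last two factors) is an isomorphism, and hence $$\square_w=(V_0\otimes V_1,\,V_0,\,V_1,\,V_2^\vee,\,V_3^\vee,\,\mathrm{id},\,\phi_w),\qquad \phi_w=\langle-,w\rangle^{-1},$$ is a geometric square.
   Context: $k$ is algebraically closed of characteristic $0$. A quintuple $(V_0,V_1,V_2,V_3,W)$, with $V_i$ $2$-dimensional vector spaces and $0\neq W=kw\subset V_0\otimes V_1\otimes V_2\otimes V_3$, is geometric if for all $j\in\{0,1,2,3\}$ and all nonzero $\phi_j\in V_j^\vee$, $\phi_{j+1}\in V_{j+1}^\vee$ (indices mod 4), the contraction $\langle\phi_j\otimes\phi_{j+1},w\rangle$ is nonzero; the quintuple is identified with $w$. A geometric square is a septuple $(V,U_0^0,U_1^0,U_0^1,U_1^1,\phi_0,\phi_1)$ with $V$ a $4$-dimensional vector space, $U_i^j$ $2$-dimensional vector spaces and $\phi_i\colon V\to U_0^i\otimes U_1^i$ isomorphisms. *)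

From HB Require Import structures.
From mathcomp Require Import all_boot all_algebra.
From mathcomp Require Import mpoly.
Set Implicit Arguments. Unset Strict Implicit. Unset Printing Implicit Defensive.
Import GRing.Theory.
Local Open Scope ring_scope.

(* Coordinates: each V_i is identified with K^2 (basis e_0, e_1), so a tensor
   w in V_0 (x) V_1 (x) V_2 (x) V_3 is given by its 16 coordinates
   w a b c d (a index of V_0, ..., d index of V_3).  A linear form on V_i is a
   row vector phi : 'rV_2, acting by phi(e_a) = phi 0 a. *)
Definition tensor4 (K : Type) := 'I_2 -> 'I_2 -> 'I_2 -> 'I_2 -> K.

(* Geometric quintuple: for each j (mod 4) and nonzero phi_j in V_j^v,
   phi_{j+1} in V_{j+1}^v, the contraction <phi_j (x) phi_{j+1}, w>, an element
   of V_{j+2} (x) V_{j+3}, is nonzero (i.e. has a nonzero coordinate). *)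
Definition geometric (K : fieldType) (w : tensor4 K) : Prop :=
  forall phi psi : 'rV[K]_2, phi != 0 -> psi != 0 ->
  [/\ exists c d, \sum_a \sum_b phi 0 a * psi 0 b * w a b c d != 0,
      exists a d, \sum_b \sum_c phi 0 b * psi 0 c * w a b c d != 0,
      exists a b, \sum_c \sum_d phi 0 c * psi 0 d * w a b c d != 0 &
      exists b c, \sum_d \sum_a phi 0 d * psi 0 a * w a b c d != 0].

(* Index of the pair (x,y) in 'I_2 * 'I_2, identifying a tensor product of two
   2-dimensional spaces with K^4 (basis e_x (x) e_y at position 2x+y). *)
Definition pidx (x y : 'I_2) : 'I_4 := inord (2 * x + y).
Definition pfst (i : 'I_4) : 'I_2 := inord (i %/ 2).
Definition psnd (i : 'I_4) : 'I_2 := inord (i %% 2).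

(* The linear map <-, w> : V_2^v (x) V_3^v -> V_0 (x) V_1, acting on row
   vectors (coordinates in the bases e_c^v (x) e_d^v and e_a (x) e_b):
   (e_c^v (x) e_d^v) |-> sum_{a,b} w a b c d e_a (x) e_b. *)
Definition contr_mx (K : fieldType) (w : tensor4 K) : 'M[K]_4 :=
  \matrix_(i < 4, j < 4) w (pfst j) (psnd j) (pfst i) (psnd i).

(* A geometric square (V, U_0^0, U_1^0, U_0^1, U_1^1, phi_0, phi_1) with all
   spaces given in coordinates (V = K^4, U_i^j = K^2, U_0^i (x) U_1^i = K^4):
   phi_0 and phi_1 are isomorphisms V -> U_0^i (x) U_1^i. *)
Definition geometric_square (K : fieldType) (phi0 phi1 : 'M[K]_4) : Prop :=
  phi0 \in unitmx /\ phi1 \in unitmx.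

Definition tcoord (K : Type) (w : tensor4 K) : 'I_16 -> K :=
  fun i => w (inord (i %/ 8 %% 2)) (inord (i %/ 4 %% 2))
             (inord (i %/ 2 %% 2)) (inord (i %% 2)).

Definition zariski_open (K : fieldType) (n : nat) (U : ('I_n -> K) -> Prop) :=
  exists S : seq {mpoly K[n]},
    forall x, U x <-> exists2 p, p \in S & p.@[x] != 0.

From mathcomp Require Import all_boot all_algebra.
From mathcomp Require Import mpoly.
From mathcomp Require Import zify ring.
Set Implicit Arguments. Unset Strict Implicit. Unset Printing Implicit Defensive.
Import GRing.Theory.
Local Open Scope ring_scope.

(* The contraction matrix <-, w> depends polynomially on w, so its determinant
   is a polynomial in the 16 coordinates of w and U' is its nonvanishing locus.
   U' meets the geometric tensors: the identity tensor w0 = sum e_a (x) e_b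
   (x) e_a (x) e_b has contraction matrix 1, and contracting w0 with phi and
   psi on two adjacent factors gives the outer product of phi and psi, which is
   nonzero when phi and psi are. *)

Lemma zariski_open_nonvanishing (K : fieldType) (n : nat) (p : {mpoly K[n]}) :
  zariski_open (fun x => p.@[x] != 0).
Proof.
exists [:: p] => x; split=> [p_x | [q]]; first by exists p; rewrite ?mem_seq1.
by rewrite mem_seq1 => /eqP ->.
Qed.

Lemma sum_mul_delta (T : finType) (R : pzSemiRingType) (f : T -> R) (x : T) :
  \sum_a f a * (a == x)%:R = f x.
Proof.
rewrite (bigD1 x) //= eqxx mulr1 big1 ?addr0 // => a /negbTE->.
by rewrite mulr0.
Qed.

Lemma rowv_neq0 (K : fieldType) (n : nat) (phi : 'rV[K]_n) :
  phi != 0 -> exists c, phi 0 c != 0.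
Proof.
move=> phi_neq0; apply/existsP; apply: contraR phi_neq0 => /existsPn phi0.
by apply/eqP/rowP => j; rewrite mxE; apply/eqP/negPn/phi0.
Qed.

Lemma pfst_psnd_inj (i j : 'I_4) : pfst i = pfst j -> psnd i = psnd j -> i = j.
Proof.
have := ltn_ord i; have := ltn_ord j => j_lt4 i_lt4.
move=> /(congr1 val) + /(congr1 val); rewrite /= !inordK; try lia.
move=> eq_fst eq_snd; apply: val_inj => /=.
by rewrite (divn_eq i 2) (divn_eq j 2) eq_fst eq_snd.
Qed.

Section IdentityTensor.
Variable K : fieldType.

Definition id_tensor : tensor4 K := fun a b c d => (a == c)%:R * (b == d)%:R.

Lemma sum2_mul_delta (g : 'I_2 -> 'I_2 -> K) (x y : 'I_2) :
  \sum_a \sum_b g a b * ((a == x)%:R * (b == y)%:R) = g x y.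
Proof.
rewrite -(sum_mul_delta (fun a => g a y) x); apply: eq_bigr => a _.
rewrite -(sum_mul_delta (g a) y) big_distrl; apply: eq_bigr => b _ /=; ring.
Qed.

Lemma geometric_id_tensor : geometric id_tensor.
Proof.
move=> phi psi /rowv_neq0 [x phi_x] /rowv_neq0 [y psi_y].
have outer_neq0 (t : 'I_2 -> 'I_2 -> K) u v :
    phi 0 u * psi 0 v != 0 ->
    (forall a b, t a b = (a == u)%:R * (b == v)%:R) ->
    \sum_a \sum_b phi 0 a * psi 0 b * t a b != 0.
  move=> uv_neq0 tE.
  under eq_bigr => a _ do under eq_bigr => b _ do rewrite tE.
  by rewrite sum2_mul_delta.
have xy_neq0 : phi 0 x * psi 0 y != 0 by rewrite mulf_neq0.
split.
- by exists x, y; apply: outer_neq0 xy_neq0 _.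
- exists y, x; apply: outer_neq0 xy_neq0 _ => b c.
  by rewrite /id_tensor mulrC (eq_sym y).
- exists x, y; apply: outer_neq0 xy_neq0 _ => c d.
  by rewrite /id_tensor (eq_sym x) (eq_sym y).
- exists x, y; apply: outer_neq0 xy_neq0 _ => d a.
  by rewrite /id_tensor mulrC (eq_sym x).
Qed.

Lemma contr_mx_id_tensor : contr_mx id_tensor = 1%:M.
Proof.
apply/matrixP => i j; rewrite !mxE /id_tensor -natrM mulnb (eq_sym i).
congr _%:R; congr nat_of_bool; apply/andP/eqP => [[/eqP + /eqP]|->//].
exact: pfst_psnd_inj.
Qed.

End IdentityTensor.

Section ContractionDeterminant.
Variable K : fieldType.

(* Entry (i, j) of contr_mx w is coordinate 4 j + i of tcoord w. *)
Definition contr_coord (i j : 'I_4) : 'I_16 := inord (4 * j + i).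

Definition contr_det : {mpoly K[16]} :=
  \det (\matrix_(i, j) 'X_(contr_coord i j)).

Lemma meval_contr_det (w : tensor4 K) :
  contr_det.@[tcoord w] = \det (contr_mx w).
Proof.
rewrite /contr_det -det_map_mx; congr (\det _); apply/matrixP => i j.
rewrite [LHS]mxE /= !mxE mevalXU /tcoord /contr_coord /pfst /psnd.
have := ltn_ord i; have := ltn_ord j => j_lt4 i_lt4.
rewrite inordK; last by lia.
by congr w; apply: val_inj; rewrite /= !inordK //; lia.
Qed.

End ContractionDeterminant.

Theorem proposition3p13 (K : closedFieldType) (hK : [pchar K] =i pred0) :
  exists U : ('I_16 -> K) -> Prop,
    zariski_open U /\
    (exists w : tensor4 K, geometric w /\ U (tcoord w)) /\
    (forall w : tensor4 K, geometric w -> U (tcoord w) ->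
       contr_mx w \in unitmx /\
       geometric_square 1%:M (invmx (contr_mx w))).
Proof.
exists (fun x => (@contr_det K).@[x] != 0); split.
  exact: zariski_open_nonvanishing.
split.
  exists (@id_tensor K); split; first exact: geometric_id_tensor.
  by rewrite meval_contr_det contr_mx_id_tensor det1 oner_neq0.
move=> w _; rewrite meval_contr_det -unitfE -unitmxE => w_unit.
by split=> //; split; rewrite ?unitmx1 ?unitmx_inv.
Qed.
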